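(* For every two-dimensional Minkowski space $X$ we have $m(X)=3$.
   Context: A Minkowski space is a finite-dimensional real normed space $(X,\|\cdot\|)$. For a set $S\subseteq X$, its midpoint set is $M(S)=\{\tfrac12(x+y): x,y\in S,\ x\neq y\}$. A set $S\subseteq X$ is an M-set if every vector in $M(S)$ has norm exactly $1$ and every vector in $S$ has norm strictly greater than $1$. $m(X)$ denotes the largest cardinality of an M-set in $X$ if such a largest finite cardinality exists, and $m(X)=\infty$ otherwise. *)

From Stdlib Require Import Reals List.
Import ListNotations.
Open Scope R_scope.

(* Every two-dimensional real normed space is linearly isometric to
   R^2 = R*R equipped with some norm; we model X as (R*R, N). *)
Definition vec := (R * R)%type.
Definition vadd (x y : vec) : vec := (fst x + fst y, snd x + snd y).
Definition vscale (a : R) (x : vec) : vec := (a * fst x, a * snd x).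
Definition vzero : vec := (0, 0).

Record is_norm (N : vec -> R) : Prop := {
  norm_nonneg : forall x, 0 <= N x;
  norm_definite : forall x, N x = 0 -> x = vzero;
  norm_homog : forall a x, N (vscale a x) = Rabs a * N x;
  norm_triangle : forall x y, N (vadd x y) <= N x + N y
}.

Definition midpt (x y : vec) : vec := vscale (1/2) (vadd x y).

Definition M_set (N : vec -> R) (S : vec -> Prop) : Prop :=
  (forall x y, S x -> S y -> x <> y -> N (midpt x y) = 1) /\
  (forall x, S x -> 1 < N x).

Definition enumerates (S : vec -> Prop) (l : list vec) : Prop :=
  NoDup l /\ forall x, S x <-> In x l.

(* m(X) = k : there is an M-set of cardinality k, and every M-set
   (possibly infinite) is finite of cardinality at most k. *)
Definition m_equals (N : vec -> R) (k : nat) : Prop :=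
  (exists S l, M_set N S /\ enumerates S l /\ length l = k) /\
  (forall S, M_set N S -> exists l, enumerates S l /\ (length l <= k)%nat).

(* If a, b, c lie in an M-set, their midpoints m1, m2, m3 are unit
   vectors and b = m1 + m2 - m3 (cyclically).  In a normed plane, if one unit
   vector is a nonnegative combination of two others, say m3 = al m1 + be m2,
   then m1 + m2 - m3 has norm at most 1; so none of the m_i lies in the cone of
   the other two, which forces det(a,b), det(b,c), det(c,a) to have a common
   sign.  For four points a, b, c, d the triples abc, abd, acd then give det a c
   and det c a the same sign, which is absurd.

   Rotating a unit vector x continuously to -x, the norm of x + u
   passes from 2 to 0, so some unit u = y has N (x + y) = 1; then
   {-2x, -2y, 2(x + y)} has midpoints -(x + y), y, x and is an M-set. *)

From Stdlib Require Import Reals List Lra Lia Classical.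
Import ListNotations.
Open Scope R_scope.

Definition det (x y : vec) : R := fst x * snd y - snd x * fst y.
Definition vsub (x y : vec) : vec := vadd x (vscale (-1) y).
Definition lincomb (a : R) (x : vec) (b : R) (y : vec) : vec :=
  vadd (vscale a x) (vscale b y).

Ltac vec_field :=
  apply injective_projections;
  unfold lincomb, vsub, midpt, vadd, vscale, vzero; simpl; field.

Lemma midpt_comm x y : midpt x y = midpt y x.
Proof. vec_field. Qed.

Lemma midpt_diag x : midpt x x = x.
Proof. vec_field. Qed.

Lemma midpt_cancel_l x y z : midpt x y = midpt x z -> y = z.
Proof.
  unfold midpt, vadd, vscale; intro h; injection h as h1 h2.
  apply injective_projections; lra.
Qed.

Lemma det_anti x y : det x y = - det y x.
Proof. unfold det; ring. Qed.

Lemma midpts_reflect a b c : vsub (vadd (midpt a b) (midpt b c)) (midpt c a) = b.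
Proof. vec_field. Qed.

Lemma det_midpts a b c :
  det a b = 2 * (det (midpt c a) (midpt a b) + det (midpt a b) (midpt b c)).
Proof. unfold det, midpt, vadd, vscale; simpl; field. Qed.

Lemma cramer x y z : det x y <> 0 ->
  z = lincomb (- det y z / det x y) x (- det z x / det x y) y.
Proof. intro h; unfold det in *; vec_field; exact h. Qed.

Lemma collinear_of_det_eq0 x y : x <> vzero -> det x y = 0 ->
  exists t, y = vscale t x.
Proof.
  destruct x as [x1 x2], y as [y1 y2]; unfold det; simpl; intros hx hd.
  assert (hq : x1 ^ 2 + x2 ^ 2 <> 0) by (intro h; apply hx; unfold vzero; f_equal; nra).
  assert (h1 : x2 * (x1 * y2 - x2 * y1) = 0) by (rewrite hd; ring).
  assert (h2 : x1 * (x1 * y2 - x2 * y1) = 0) by (rewrite hd; ring).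
  exists ((x1 * y1 + x2 * y2) / (x1 ^ 2 + x2 ^ 2)).
  unfold vscale; simpl; f_equal; field_simplify_eq; auto; lra.
Qed.

Lemma Rdiv_opp_nonneg a c : c <> 0 -> a * c <= 0 -> 0 <= - a / c.
Proof.
  intros hc h. replace (- a / c) with ((- a * c) * / (c * c)) by (field; auto).
  apply Rmult_le_pos; [lra|]. apply Rlt_le, Rinv_0_lt_compat.
  destruct (Rtotal_order c 0) as [?|[?|?]]; [nra|contradiction|nra].
Qed.

Lemma pairwise_sums_same_sign A B C :
  (C <> 0 -> A * C <= 0 -> B * C <= 0 -> False) ->
  (A <> 0 -> B * A <= 0 -> C * A <= 0 -> False) ->
  (B <> 0 -> C * B <= 0 -> A * B <= 0 -> False) ->
  ~ (B = 0 /\ C = 0) ->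
  (0 < B + C /\ 0 < C + A /\ 0 < A + B) \/ (B + C < 0 /\ C + A < 0 /\ A + B < 0).
Proof.
  intros hC hA hB h0.
  destruct (Rtotal_order A 0) as [?|[?|?]];
  destruct (Rtotal_order B 0) as [?|[?|?]];
  destruct (Rtotal_order C 0) as [?|[?|?]];
  first [ left; repeat split; lra | right; repeat split; lra
        | exfalso; first [ apply hC; nra | apply hA; nra | apply hB; nra | apply h0; lra ] ].
Qed.

(* Grow a duplicate-free list inside [P] until it is maximal; the bound makes
   this terminate after at most [n] steps. *)
Lemma enumeration_of_bounded_NoDup {T : Type} (P : T -> Prop) (n : nat) :
  (forall l, NoDup l -> (forall x, In x l -> P x) -> (length l <= n)%nat) ->
  exists l, (NoDup l /\ (forall x, P x <-> In x l)) /\ (length l <= n)%nat.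
Proof.
  intro bound.
  enough (grow : forall d l, NoDup l -> (forall x, In x l -> P x) -> (length l + d = n)%nat ->
            exists l', (NoDup l' /\ (forall x, P x <-> In x l')) /\ (length l' <= n)%nat)
    by (apply (grow n []); [constructor | simpl; tauto | reflexivity]).
  induction d as [|d IH]; intros l hl hP hlen;
    (destruct (classic (exists x, P x /\ ~ In x l)) as [[x [Px nx]]|hmax];
     [| exists l; repeat split; [assumption | | auto | lia];
        intro Px; apply NNPP; intro; eauto ]).
  - assert (length (x :: l) <= n)%nat by (apply bound; [constructor | intros y [<-|]]; auto).
    simpl in *; lia.
  - apply (IH (x :: l)); [constructor | intros y [<-|] | simpl; lia]; auto.
Qed.

Definition dir (t : R) : vec := (cos t, sin t).

Lemma dir_neq0 t : dir t <> vzero.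
Proof.
  unfold dir, vzero; intro h; injection h as hc hs.
  pose proof (sin2_cos2 t); unfold Rsqr in *; rewrite hc, hs in *; lra.
Qed.

Section Norm.

Variable N : vec -> R.
Hypothesis HN : is_norm N.

Lemma N_scale a x : N (vscale a x) = Rabs a * N x.
Proof. exact (norm_homog _ HN a x). Qed.

Lemma N_lincomb_le a x b y : N (lincomb a x b y) <= Rabs a * N x + Rabs b * N y.
Proof. rewrite <- !N_scale; apply (norm_triangle _ HN). Qed.

Lemma N_opp x : N (vscale (-1) x) = N x.
Proof. rewrite N_scale, Rabs_left by lra; ring. Qed.

Lemma N_zero : N vzero = 0.
Proof.
  replace vzero with (vscale 0 vzero) by vec_field.
  rewrite N_scale, Rabs_R0; ring.
Qed.

Lemma N_pos x : x <> vzero -> 0 < N x.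
Proof.
  intro hx; destruct (Rle_lt_or_eq_dec _ _ (norm_nonneg _ HN x)) as [h|h]; auto.
  exfalso; apply hx, (norm_definite _ HN); auto.
Qed.

Lemma unit_collinear x y : det x y = 0 -> N x = 1 -> N y = 1 ->
  y = x \/ y = vscale (-1) x.
Proof.
  intros hd hx hy.
  assert (x0 : x <> vzero) by (intros ->; rewrite N_zero in hx; lra).
  destruct (collinear_of_det_eq0 x y x0 hd) as [t ->].
  rewrite N_scale, hx, Rmult_1_r in hy.
  destruct (Rle_lt_dec 0 t) as [ht|ht].
  - rewrite Rabs_pos_eq in hy by exact ht; subst t; left; vec_field.
  - rewrite Rabs_left in hy by exact ht; right; f_equal; lra.
Qed.

Lemma norm_cone_reflect_ordered X Y a b : 0 <= b <= a ->
  N X = 1 -> N Y = 1 -> N (lincomb a X b Y) = 1 ->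
  N (vsub (vadd X Y) (lincomb a X b Y)) <= 1.
Proof.
  set (Z := lincomb a X b Y); intros hab hX hY hZ.
  assert (h_lo : 1 <= a + b).
  { rewrite <- hZ; eapply Rle_trans; [apply N_lincomb_le|].
    rewrite hX, hY, !Rabs_pos_eq; lra. }
  assert (h_hi : a <= 1 + b).
  { replace a with (N (lincomb 1 Z (- b) Y)).
    - eapply Rle_trans; [apply N_lincomb_le|].
      rewrite hZ, hY, Rabs_R1, Rabs_Ropp, Rabs_pos_eq; lra.
    - replace (lincomb 1 Z (- b) Y) with (vscale a X) by (unfold Z; vec_field).
      rewrite N_scale, hX, Rabs_pos_eq; lra. }
  (* [a (X + Y - Z) = (1 - a) Z + (a - b) Y] *)
  assert (h_scaled : a * N (vsub (vadd X Y) Z) <= Rabs (1 - a) + (a - b)).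
  { replace (a * N (vsub (vadd X Y) Z)) with (N (vscale a (vsub (vadd X Y) Z)))
      by (rewrite N_scale, Rabs_pos_eq; lra).
    replace (vscale a (vsub (vadd X Y) Z)) with (lincomb (1 - a) Z (a - b) Y)
      by (unfold Z; vec_field).
    eapply Rle_trans; [apply N_lincomb_le|].
    rewrite hZ, hY, (Rabs_pos_eq (a - b)); lra. }
  apply (Rmult_le_reg_l a); [lra|].
  unfold Rabs in h_scaled; destruct (Rcase_abs (1 - a)); lra.
Qed.

Lemma norm_cone_reflect X Y a b : 0 <= a -> 0 <= b ->
  N X = 1 -> N Y = 1 -> N (lincomb a X b Y) = 1 ->
  N (vsub (vadd X Y) (lincomb a X b Y)) <= 1.
Proof.
  intros ha hb hX hY hZ.
  destruct (Rle_lt_dec b a) as [hab|hab].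
  - apply norm_cone_reflect_ordered; auto; lra.
  - replace (vsub (vadd X Y) (lincomb a X b Y))
      with (vsub (vadd Y X) (lincomb b Y a X)) by vec_field.
    replace (lincomb a X b Y) with (lincomb b Y a X) in hZ by vec_field.
    apply norm_cone_reflect_ordered; auto; lra.
Qed.

Lemma N_pair_lipschitz a1 a2 b1 b2 :
  Rabs (N (a1, a2) - N (b1, b2)) <= Rabs (a1 - b1) * N (1, 0) + Rabs (a2 - b2) * N (0, 1).
Proof.
  assert (half : forall a1 a2 b1 b2,
             N (a1, a2) - N (b1, b2) <= Rabs (a1 - b1) * N (1, 0) + Rabs (a2 - b2) * N (0, 1)).
  { clear a1 a2 b1 b2; intros a1 a2 b1 b2.
    replace (a1, a2) with (vadd (b1, b2) (lincomb (a1 - b1) (1, 0) (a2 - b2) (0, 1)))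
      by vec_field.
    pose proof (norm_triangle _ HN (b1, b2) (lincomb (a1 - b1) (1, 0) (a2 - b2) (0, 1))).
    pose proof (N_lincomb_le (a1 - b1) (1, 0) (a2 - b2) (0, 1)).
    lra. }
  apply Rabs_le; split; [|apply half].
  pose proof (half b1 b2 a1 a2) as hba.
  rewrite (Rabs_minus_sym b1), (Rabs_minus_sym b2) in hba; lra.
Qed.

Lemma continuity_pt_N_pair f g t : continuity_pt f t -> continuity_pt g t ->
  continuity_pt (fun s => N (f s, g s)) t.
Proof.
  unfold continuity_pt, continue_in, limit1_in, limit_in; simpl; unfold R_dist.
  intros hf hg eps heps.
  pose proof (norm_nonneg _ HN (1, 0)); pose proof (norm_nonneg _ HN (0, 1)).
  set (K := N (1, 0) + N (0, 1) + 1).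
  assert (hK : 0 < eps / K) by (apply Rdiv_lt_0_compat; unfold K; lra).
  destruct (hf (eps / K) hK) as [d1 [hd1 h1]].
  destruct (hg (eps / K) hK) as [d2 [hd2 h2]].
  exists (Rmin d1 d2); split; [apply Rmin_pos; lra|].
  intros s [Ds hs].
  assert (hfs : Rabs (f s - f t) < eps / K)
    by (apply h1; split; auto; pose proof (Rmin_l d1 d2); lra).
  assert (hgs : Rabs (g s - g t) < eps / K)
    by (apply h2; split; auto; pose proof (Rmin_r d1 d2); lra).
  assert (hKeps : eps / K * K = eps) by (field; unfold K; lra).
  eapply Rle_lt_trans; [apply N_pair_lipschitz|].
  assert (Rabs (f s - f t) * N (1, 0) <= eps / K * N (1, 0)) by (apply Rmult_le_compat_r; lra).
  assert (Rabs (g s - g t) * N (0, 1) <= eps / K * N (0, 1)) by (apply Rmult_le_compat_r; lra).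
  assert (eps / K * (N (1, 0) + N (0, 1)) < eps / K * K)
    by (apply Rmult_lt_compat_l; [exact hK | unfold K; lra]).
  lra.
Qed.

Lemma unit_hexagon : exists x y, N x = 1 /\ N y = 1 /\ N (vadd x y) = 1.
Proof.
  set (u t := vscale (/ N (dir t)) (dir t)).
  assert (hpos : forall t, 0 < N (dir t)) by (intro; apply N_pos, dir_neq0).
  assert (hu : forall t, N (u t) = 1).
  { intro t; unfold u; rewrite N_scale, Rabs_pos_eq.
    - field; specialize (hpos t); lra.
    - left; apply Rinv_0_lt_compat, hpos. }
  assert (hPI : u PI = vscale (-1) (u 0)).
  { assert (e : dir PI = vscale (-1) (dir 0))
      by (unfold dir; rewrite cos_PI, sin_PI, cos_0, sin_0; vec_field).
    unfold u; rewrite e, N_opp.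
    specialize (hpos 0); vec_field; lra. }
  set (f t := 1 - N (vadd (u 0) (u t))).
  assert (hf : continuity f).
  { intro t; unfold f, u, vadd, vscale, dir; simpl.
    apply continuity_pt_minus; [apply continuity_pt_const; intros ? ?; reflexivity|].
    assert (hinv : continuity_pt (fun s => / N (cos s, sin s)) t).
    { apply continuity_pt_inv; [|specialize (hpos t); unfold dir in hpos; lra].
      apply continuity_pt_N_pair; [apply continuity_cos | apply continuity_sin]. }
    apply continuity_pt_N_pair; apply continuity_pt_plus;
      try (apply continuity_pt_const; intros ? ?; reflexivity);
      apply continuity_pt_mult; auto; [apply continuity_cos | apply continuity_sin]. }
  clearbody u.
  assert (hf0 : f 0 < 0).
  { unfold f; replace (vadd (u 0) (u 0)) with (vscale 2 (u 0)) by vec_field.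
    rewrite N_scale, hu, Rabs_pos_eq; lra. }
  assert (hfPI : 0 < f PI).
  { unfold f; rewrite hPI.
    replace (vadd (u 0) (vscale (-1) (u 0))) with vzero by vec_field.
    rewrite N_zero; lra. }
  destruct (IVT f 0 PI hf PI_RGT_0 hf0 hfPI) as [z [_ hz]].
  exists (u 0), (u z); repeat split; auto.
  unfold f in hz; lra.
Qed.

Lemma M_set_of_unit_hexagon x y : N x = 1 -> N y = 1 -> N (vadd x y) = 1 ->
  let l := [vscale (-2) x; vscale (-2) y; vscale 2 (vadd x y)] in
  M_set N (fun v => In v l) /\ enumerates (fun v => In v l) l.
Proof.
  intros hx hy hxy l.
  set (p := vscale (-2) x); set (q := vscale (-2) y); set (r := vscale 2 (vadd x y)).
  assert (hpq : N (midpt p q) = 1).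
  { replace (midpt p q) with (vscale (-1) (vadd x y)) by (unfold p, q; vec_field).
    rewrite N_opp; exact hxy. }
  assert (hpr : N (midpt p r) = 1) by (replace (midpt p r) with y by (unfold p, r; vec_field); exact hy).
  assert (hqr : N (midpt q r) = 1) by (replace (midpt q r) with x by (unfold q, r; vec_field); exact hx).
  assert (hnorm2 : forall v, In v l -> N v = 2).
  { intros v [<-|[<-|[<-|[]]]]; unfold p, q, r; rewrite N_scale;
      [rewrite hx | rewrite hy | rewrite hxy]; unfold Rabs; destruct Rcase_abs; lra. }
  (* a point is its own midpoint, so equal points would have norm 1, not 2 *)
  assert (hneq : forall v w, In v l -> N (midpt v w) = 1 -> v <> w).
  { intros v w hv hvw <-; rewrite midpt_diag, (hnorm2 v hv) in hvw; lra. }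
  assert (Hp : In p l) by (left; reflexivity).
  assert (Hq : In q l) by (right; left; reflexivity).
  split; [split|split].
  - intros v w [<-|[<-|[<-|[]]]] [<-|[<-|[<-|[]]]] hvw;
      solve [ contradiction | rewrite midpt_comm; assumption | assumption ].
  - intros v hv; rewrite (hnorm2 v hv); lra.
  - pose proof (hneq p q Hp hpq); pose proof (hneq p r Hp hpr); pose proof (hneq q r Hq hqr).
    repeat constructor; simpl; intuition.
  - reflexivity.
Qed.

Section MSet.

Variable S : vec -> Prop.
Hypothesis HS : M_set N S.

Lemma M_set_midpt_norm a b : S a -> S b -> a <> b -> N (midpt a b) = 1.
Proof. apply HS. Qed.

Lemma M_set_norm_gt1 a : S a -> 1 < N a.
Proof. apply HS. Qed.

Section Triple.

Variables a b c : vec.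
Hypotheses (Sa : S a) (Sb : S b) (Sc : S c) (nab : a <> b) (nbc : b <> c) (nca : c <> a).

Let m1 := midpt a b.
Let m2 := midpt b c.
Let m3 := midpt c a.

(* By Cramer's rule the hypotheses say that [m3] is a nonnegative combination of
   [m1] and [m2]; then [b = m1 + m2 - m3] would have norm at most 1. *)
Lemma M_set_midpt_not_in_cone :
  det m1 m2 <> 0 -> det m2 m3 * det m1 m2 <= 0 -> det m3 m1 * det m1 m2 <= 0 -> False.
Proof.
  intros hd h1 h2.
  assert (hb : N b <= 1).
  { assert (N1 : N m1 = 1) by (apply M_set_midpt_norm; auto).
    assert (N2 : N m2 = 1) by (apply M_set_midpt_norm; auto).
    assert (N3 : N m3 = 1) by (apply M_set_midpt_norm; auto).
    pose proof (cramer m1 m2 m3 hd) as E.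
    rewrite <- (midpts_reflect a b c); fold m1 m2 m3.
    rewrite E in N3 |- *.
    apply norm_cone_reflect; auto; apply Rdiv_opp_nonneg; auto. }
  pose proof (M_set_norm_gt1 b Sb); lra.
Qed.

Lemma M_set_midpts_not_collinear : det m1 m2 = 0 -> det m3 m1 = 0 -> False.
Proof.
  intros h12 h31.
  assert (N1 : N m1 = 1) by (apply M_set_midpt_norm; auto).
  assert (N2 : N m2 = 1) by (apply M_set_midpt_norm; auto).
  assert (N3 : N m3 = 1) by (apply M_set_midpt_norm; auto).
  rewrite det_anti in h31.
  destruct (unit_collinear m1 m2 h12 N1 N2) as [e2|e2];
    [|destruct (unit_collinear m1 m3 ltac:(lra) N1 N3) as [e3|e3]].
  - apply nca; apply (midpt_cancel_l b).
    unfold m1, m2 in e2; rewrite e2; apply midpt_comm.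
  - apply nbc; apply (midpt_cancel_l a).
    unfold m1, m3 in e3; rewrite <- e3, midpt_comm; reflexivity.
  - apply nab; apply (midpt_cancel_l c).
    rewrite <- e2 in e3; unfold m2, m3 in e3; rewrite e3; apply midpt_comm.
Qed.

End Triple.

Lemma M_set_det_same_sign a b c : S a -> S b -> S c -> a <> b -> b <> c -> c <> a ->
  (0 < det a b /\ 0 < det b c /\ 0 < det c a) \/ (det a b < 0 /\ det b c < 0 /\ det c a < 0).
Proof.
  intros Sa Sb Sc nab nbc nca.
  rewrite (det_midpts a b c), (det_midpts b c a), (det_midpts c a b).
  destruct (pairwise_sums_same_sign
              (det (midpt b c) (midpt c a)) (det (midpt c a) (midpt a b)) (det (midpt a b) (midpt b c)))
    as [h|h].
  - exact (M_set_midpt_not_in_cone a b c Sa Sb Sc nab nbc nca).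
  - exact (M_set_midpt_not_in_cone b c a Sb Sc Sa nbc nca nab).
  - exact (M_set_midpt_not_in_cone c a b Sc Sa Sb nca nab nbc).
  - intros [hB hC]; exact (M_set_midpts_not_collinear a b c Sa Sb Sc nab nbc nca hC hB).
  - left; lra.
  - right; lra.
Qed.

Lemma M_set_no_four a b c d : S a -> S b -> S c -> S d ->
  a <> b -> a <> c -> a <> d -> b <> c -> b <> d -> c <> d -> False.
Proof.
  intros Sa Sb Sc Sd nab nac nad nbc nbd ncd.
  pose proof (det_anti a c).
  destruct (M_set_det_same_sign a b c) as [h1|h1]; auto;
  destruct (M_set_det_same_sign a b d) as [h2|h2]; auto;
  destruct (M_set_det_same_sign a c d) as [h3|h3]; auto; lra.
Qed.

Lemma M_set_NoDup_length l : NoDup l -> (forall x, In x l -> S x) -> (length l <= 3)%nat.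
Proof.
  intros hl hS.
  destruct l as [|a [|b [|c [|d l]]]]; simpl; auto.
  exfalso.
  apply NoDup_cons_iff in hl as [ha hl]; apply NoDup_cons_iff in hl as [hb hl];
    apply NoDup_cons_iff in hl as [hc _]; simpl in *.
  apply (M_set_no_four a b c d); try (apply hS; tauto); intro; subst; tauto.
Qed.

End MSet.
End Norm.

Theorem theorem1 : forall N : vec -> R, is_norm N -> m_equals N 3.
Proof.
  intros N HN; split.
  - destruct (unit_hexagon N HN) as [x [y [hx [hy hxy]]]].
    destruct (M_set_of_unit_hexagon N HN x y hx hy hxy) as [hM hl].
    eexists _, _; split; [exact hM | split; [exact hl | reflexivity]].
  - intros S HS.
    exact (enumeration_of_bounded_NoDup S 3 (M_set_NoDup_length N HN S HS)).
Qed.
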